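(* Let $q$ be a prime power, $m\ge1$, and $1\le k<n$ integers. Let $X\in \mathbb{F}_{q^m}^{k\times(n-k)}$ be chosen uniformly at random. Then $$\Pr\big(\mathrm{rs} [\,I_k \mid X\,] \text{ is an MRD code}\big) \geq 1-\sum_{r=0}^k r\binom{k}{k-r}_q\binom{n-k}{r}_q q^{r^2}q^{-m}.$$
   Context: $\binom{a}{b}_q$ is the Gaussian binomial coefficient, the number of $b$-dimensional subspaces of $\mathbb{F}_q^a$. Fix an $\mathbb{F}_q$-basis $b_1,\dots,b_m$ of $\mathbb{F}_{q^m}$; the rank of $v\in\mathbb{F}_{q^m}^n$ is the rank of the matrix $M\in\mathbb{F}_q^{m\times n}$ with $v_j=\sum_i M_{ij}b_i$, and the rank distance is $d_R(u,v)=\mathrm{rk}(u-v)$. A linear rank-metric code of dimension $k$ is a $k$-dimensional $\mathbb{F}_{q^m}$-subspace of $\mathbb{F}_{q^m}^n$; it is MRD if its minimum rank distance is $n-k+1$. $\mathrm{rs}$ denotes the $\mathbb{F}_{q^m}$-row space. *)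

From HB Require Import structures.
From mathcomp Require Import all_boot all_order all_algebra all_field.
Set Implicit Arguments. Unset Strict Implicit. Unset Printing Implicit Defensive.
Import GRing.Theory.
Local Open Scope ring_scope.

(* Gaussian binomial coefficient [a choose b]_q, via the standard product
   formula  prod_{i<b} (q^(a-i) - 1) / (q^(i+1) - 1)  (it is 0 when b > a,
   since then the factor for i = a vanishes). *)
Definition gauss_binom (q a b : nat) : rat :=
  \prod_(i < b) (((q ^ (a - i))%N%:R - 1) / ((q ^ i.+1)%N%:R - 1)).

Section RankMetric.
Variables (F : finFieldType) (L : fieldExtType F).
(* L = F_{q^m} as an F-vector space (F = F_q); finvect_type L is the same
   field equipped with its (canonical) finite-type structure. *)
Local Notation FL := (finvect_type L).

Definition rank_mx_of {N : nat} (v : 'rV[FL]_N) : 'M[F]_(\dim {:FL}, N) :=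
  \matrix_(i < \dim {:FL}, j < N) coord (vbasis {:FL}) i (v 0 j).

Definition rk {N : nat} (v : 'rV[FL]_N) : nat := \rank (rank_mx_of v).

Definition rank_dist {N : nat} (u v : 'rV[FL]_N) : nat := rk (u - v).

Definition min_rank_dist_is {k0 N : nat} (G : 'M[FL]_(k0, N)) (d : nat) : bool :=
  [exists u : 'rV[FL]_N, exists v : 'rV[FL]_N,
     [&& (u <= G)%MS, (v <= G)%MS, u != v & rank_dist u v == d]] &&
  [forall u : 'rV[FL]_N, forall v : 'rV[FL]_N,
     [&& (u <= G)%MS, (v <= G)%MS & u != v] ==> (d <= rank_dist u v)%N].

Definition is_MRD {k0 N : nat} (G : 'M[FL]_(k0, N)) : bool :=
  min_rank_dist_is G (N - \rank G + 1)%N.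

End RankMetric.

(* The code rs [I | X] fails to be MRD exactly when some nonzero codeword has
   rank at most n - k, i.e. when det ([I | X] B^T) = 0 for some full-rank
   B in F_q^(k x n).  Sort such B by the rank r of their last n - k columns.
   Left multiplication by GL_k(F_q) does not affect whether the determinant
   vanishes, and brings B to a lower block form [[A, 0], [C, D]] with A and D
   of full row rank; the invertible lower block-triangular matrices act freely
   on these forms, so double counting bounds the number of bad X by
   (#forms / #group) = [k, k-r]_q [n-k, r]_q q^(r^2) times the number of bad X
   for a single form.  For a fixed form, det ([I | X] B^T) = det [A^T | C^T + X D^T];
   X |-> X D^T is onto with fibres of equal size, and det [A^T | Z] = 0 reduces
   to the singularity of an r x r block over a field with Q = q^m elements,
   which has probability 1 - prod_(i<r) (1 - Q^(i-r)) <= r / Q. *)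

From mathcomp Require Import all_boot all_order all_algebra all_field.
From mathcomp Require Import perm ring zify.

Set Implicit Arguments.
Unset Strict Implicit.
Unset Printing Implicit Defensive.

Import Order.TTheory GRing.Theory Num.Theory.
Local Open Scope ring_scope.

(* The number of ordered b-tuples of linearly independent vectors of F_q^a. *)
Definition nframes (q a b : nat) : nat := \prod_(i < b) (q ^ a - q ^ i).

Lemma nframesE (q a b : nat) : (0 < q)%N ->
  (nframes q a b)%:R
  = \prod_(i < b) (q ^ i)%:R * \prod_(i < b) ((q ^ (a - i))%:R - 1) :> rat.
Proof.
move=> q_gt0; rewrite natr_prod -big_split; apply: eq_bigr => i _ /=.
have [le_ia | lt_ai] := leqP i a.
  by rewrite natrB ?leq_pexp2l // -{1}(subnKC le_ia) expnD natrM mulrBr mulr1.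
have /eqP-> : (q ^ a - q ^ i == 0)%N by rewrite subn_eq0 leq_pexp2l // ltnW.
have /eqP-> : (a - i == 0)%N by rewrite subn_eq0 ltnW.
by rewrite expn0 subrr mulr0.
Qed.

Lemma gauss_binom_nframes (q a b : nat) : (1 < q)%N ->
  gauss_binom q a b = (nframes q a b)%:R / (nframes q b b)%:R.
Proof.
move=> q_gt1; have q_gt0 := ltnW q_gt1.
have pow_neq0 : \prod_(i < b) (q ^ i)%:R != 0 :> rat.
  by rewrite prodf_seq_neq0; apply/allP => i _; rewrite pnatr_eq0 -lt0n expn_gt0 q_gt0.
rewrite !nframesE // invfM mulrACA divff // mul1r /gauss_binom prodf_div.
congr (_ / _); rewrite (reindex_inj rev_ord_inj); apply: eq_bigr => i _.
by rewrite /= subnSK.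
Qed.

Lemma one_sub_sum_le_prod (R : numDomainType) n (a : 'I_n -> R) :
  (forall i, 0 <= a i <= 1) -> 1 - \sum_i a i <= \prod_i (1 - a i).
Proof.
elim: n a => [|n IHn] a a01; first by rewrite !big_ord0 subr0.
rewrite !big_ord_recr /=; set S := \sum_(i < n) _; set P := \prod_(i < n) _.
have /andP[a_ge0 a_le1] := a01 ord_max.
have S_ge0 : 0 <= S.
  by apply: sumr_ge0 => i _; have /andP[] := a01 (widen_ord (leqnSn n) i).
have IH : 1 - S <= P by apply: IHn.
apply: le_trans (_ : (1 - S) * (1 - a ord_max) <= _); last by rewrite ler_wpM2r ?subr_ge0.
have -> : (1 - S) * (1 - a ord_max) = 1 - (S + a ord_max) + S * a ord_max by ring.
by rewrite lerDl mulr_ge0.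
Qed.

(** * Finite counting *)

Lemma card_set_comp_inj (T : finType) (f : T -> T) (P : pred T) :
  injective f -> #|[set x | P (f x)]| = #|[set x | P x]|.
Proof.
move=> injf; rewrite -[RHS](card_preimset _ injf).
by apply: eq_card => x; rewrite !inE.
Qed.

Lemma card_pairs_dep (T1 T2 : finType) (P : pred T1) (Q : T1 -> T2 -> bool) :
  #|[set p : T1 * T2 | P p.1 && Q p.1 p.2]| = (\sum_(x | P x) #|[set y | Q x y]|)%N.
Proof.
rewrite -sum1_card (eq_bigl (fun p => P p.1 && Q p.1 p.2)) => [|p]; last by rewrite inE.
rewrite -(pair_big_dep P Q (fun _ _ => 1%N)); apply: eq_bigr => x _.
by rewrite sum1_card; apply: eq_card => y; rewrite inE.
Qed.

Lemma card_double_count (T U : finType) (R : T -> U -> bool) (S : {set U}) (c : nat) :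
  (forall x y, y \in S -> R x y -> (c <= #|[set y' in S | R x y']|)%N) ->
  (#|[set x | [exists y in S, R x y]]| * c <= \sum_(y in S) #|[set x | R x y]|)%N.
Proof.
move=> many_related.
have -> : (\sum_(y in S) #|[set x | R x y]| = \sum_x #|[set y in S | R x y]|)%N.
  rewrite (eq_bigr (fun y => \sum_(x | R x y) 1)%N) => [|y _]; last first.
    by rewrite sum1_card; apply: eq_card => x; rewrite inE.
  rewrite (exchange_big_dep xpredT) //=; apply: eq_bigr => x _.
  by rewrite -sum1_card; apply: eq_bigl => y; rewrite inE.
rewrite -sum_nat_const [X in (_ <= X)%N](bigID [in [set x | [exists y in S, R x y]]]) /=.
apply: leq_trans (leq_addr _ _); apply: leq_sum => x.
by rewrite inE => /exists_inP[y yS Rxy]; apply: many_related Rxy.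
Qed.

Lemma card_dsubmx_pred (T : finType) s r n (P : pred 'M[T]_(r, n)) :
  #|[set W : 'M[T]_(s + r, n) | P (dsubmx W)]| = (#|T| ^ (s * n) * #|[set Z | P Z]|)%N.
Proof.
have -> : [set W : 'M[T]_(s + r, n) | P (dsubmx W)]
    = (fun p => col_mx p.1 p.2) @: setX setT [set Z | P Z].
  apply/setP => W; rewrite inE; apply/idP/imsetP => [PW | [[U Z] + ->]].
    by exists (usubmx W, dsubmx W); rewrite ?vsubmxK // !inE.
  by rewrite !inE col_mxKd.
rewrite card_imset => [|[U Z] [U' Z'] /= /eq_col_mx [-> ->] //].
by rewrite cardsX cardsT card_mx.
Qed.

Lemma card_lower_block (R : finZmodType) m1 m2 n1 n2
    (P1 : pred 'M[R]_(m1, n1)) (P2 : pred 'M[R]_(m2, n2)) :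
  #|[set M : 'M[R]_(m1 + m2, n1 + n2)
       | [&& P1 (ulsubmx M), ursubmx M == 0 & P2 (drsubmx M)]]|
  = (#|[set A | P1 A]| * #|R| ^ (m2 * n1) * #|[set D | P2 D]|)%N.
Proof.
have -> : [set M : 'M[R]_(m1 + m2, n1 + n2)
             | [&& P1 (ulsubmx M), ursubmx M == 0 & P2 (drsubmx M)]]
    = (fun p => block_mx p.1.1 0 p.1.2 p.2) @: setX (setX [set A | P1 A] setT) [set D | P2 D].
  apply/setP => M; rewrite inE.
  apply/idP/imsetP => [/and3P[P1M /eqP urM P2M] | [[[A C] D] + ->]].
    by exists (ulsubmx M, dlsubmx M, drsubmx M); rewrite ?inE ?P1M ?P2M //= -urM submxK.
  by rewrite !inE /= block_mxKul block_mxKur block_mxKdr eqxx => /andP[/andP[-> _] ->].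
rewrite card_imset => [|[[A C] D] [[A' C'] D'] /= /eq_block_mx [-> _ -> ->] //].
by rewrite !cardsX cardsT card_mx.
Qed.

Lemma card_mulmx_pred (R : finPzRingType) k t r (D : 'M[R]_(t, r)) (E : 'M[R]_(r, t))
    (P : pred 'M[R]_(k, r)) : E *m D = 1%:M ->
  (#|[set X : 'M[R]_(k, t) | P (X *m D)]| * #|R| ^ (k * r)
   = #|[set Y | P Y]| * #|R| ^ (k * t))%N.
Proof.
move=> ED; set c := #|[set X : 'M[R]_(k, t) | X *m D == 0]|.
have card_fiber (Y : 'M[R]_(k, r)) : #|[set X | X *m D == Y]| = c.
  rewrite /c -(card_set_comp_inj (fun X => X *m D == 0) (addIr (- (Y *m E)))).
  by apply: eq_card => X; rewrite !inE mulmxBl -mulmxA ED mulmx1 subr_eq0.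
have card_preim (Q : pred 'M[R]_(k, r)) :
    #|[set X : 'M[R]_(k, t) | Q (X *m D)]| = (#|[set Y | Q Y]| * c)%N.
  rewrite -sum1_card (partition_big (fun X => X *m D) Q) => [|X]; last by rewrite inE.
  rewrite -sum_nat_const; apply: eq_big => [Y | Y QY]; first by rewrite inE.
  rewrite -(card_fiber Y) -sum1_card; apply: eq_bigl => X.
  by rewrite !inE; case: eqP => [->|_]; rewrite ?QY ?andbF.
have := card_preim predT; rewrite !cardsT !card_mx => ->.
by rewrite card_preim mulnAC mulnA.
Qed.

Lemma ursubmx_rsub (T : Type) m1 m2 n1 n2 (M : 'M[T]_(m1 + m2, n1 + n2)) :
  ursubmx M = usubmx (rsubmx M).
Proof. by apply/matrixP => i j; rewrite !mxE. Qed.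

Lemma drsubmx_rsub (T : Type) m1 m2 n1 n2 (M : 'M[T]_(m1 + m2, n1 + n2)) :
  drsubmx M = dsubmx (rsubmx M).
Proof. by apply/matrixP => i j; rewrite !mxE. Qed.

(** * Matrices over a finite field *)

Section FiniteFieldMatrices.
Variable F : finFieldType.
Local Notation q := #|F|.

Lemma row_free_col_mx a b (u : 'rV[F]_a) (A : 'M[F]_(b, a)) :
  row_free (col_mx u A) = row_free A && ~~ (u <= A)%MS.
Proof.
rewrite /row_free -addsmxE; have [uA | uNA] /= := boolP (u <= A)%MS.
  by rewrite andbF (addsmx_idPr uA); apply/negbTE; rewrite neq_ltn ltnS rank_leq_row.
suff -> : \rank (u + A)%MS = (1 + \rank A)%N by rewrite andbT eqn_add2l.
apply/eqP; rewrite eqn_leq; apply/andP; split.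
  by apply: leq_trans (mxrank_adds_leqif u A) _; rewrite leq_add2r rank_leq_row.
by rewrite add1n (ltn_leqif (mxrank_leqif_sup (addsmxSr u A))) addsmx_sub submx_refl andbT.
Qed.

Lemma card_submx_row_free a b (A : 'M[F]_(b, a)) :
  row_free A -> #|[set u : 'rV[F]_a | (u <= A)%MS]| = (q ^ b)%N.
Proof.
move=> freeA; transitivity #|(mulmx^~ A) @: [set: 'rV[F]_b]|.
  by apply: eq_card => u; rewrite inE; apply/submxP/imsetP => -[v]; exists v.
by rewrite card_imset ?cardsT ?card_mx ?mul1n //; apply: row_free_inj.
Qed.

Lemma card_row_free b a : #|[set A : 'M[F]_(b, a) | row_free A]| = nframes q a b.
Proof.
elim: b => [|b IHb].
  rewrite /nframes big_ord0 -[RHS]/(q ^ (0 * a))%N -card_mx.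
  by apply: eq_card => A; rewrite inE /row_free flatmx0 mxrank0.
have -> : [set M : 'M[F]_(1 + b, a) | row_free M]
    = (fun p => col_mx p.2 p.1) @: [set p | row_free p.1 && ~~ (p.2 <= p.1)%MS].
  apply/setP => M; rewrite inE; apply/idP/imsetP => [freeM | [[A u] + ->]].
    exists (dsubmx M, usubmx M); last by rewrite vsubmxK.
    by rewrite inE -row_free_col_mx vsubmxK.
  by rewrite inE row_free_col_mx.
rewrite card_imset; last by move=> [A u] [A' u'] /= /(@eq_col_mx _ 1) [-> ->].
rewrite (card_pairs_dep _ (fun A u => ~~ (u <= A)%MS)) /nframes big_ord_recr /=.
rewrite -/(nframes q a b) -IHb -sum_nat_const.
apply: eq_big => [A | A freeA]; first by rewrite inE.
have card_rV : (q ^ a)%N = #|{: 'rV[F]_a}| by rewrite card_mx mul1n.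
rewrite -(card_submx_row_free freeA) card_rV -(cardsC [set u : 'rV[F]_a | (u <= A)%MS]) addKn.
by apply: eq_card => u; rewrite !inE.
Qed.

Lemma card_unitmx r : #|[set Z : 'M[F]_r | Z \in unitmx]| = nframes q r r.
Proof. by rewrite -card_row_free; apply: eq_card => Z; rewrite !inE row_free_unit. Qed.

Lemma card_singular_le r :
  (#|[set Z : 'M[F]_r | \det Z == 0]|%:R : rat) <= r%:R * (q ^ (r * r))%:R / q%:R.
Proof.
have q_gt1 : (1 < q)%N := finNzRing_gt1 F.
set Q : rat := q%:R; have Q_gt1 : 1 < Q by rewrite ltr1n.
have Q_gt0 : 0 < Q := lt_trans ltr01 Q_gt1; have Q_ge0 : 0 <= Q := ltW Q_gt0.
pose a (i : 'I_r) := Q ^+ i / Q ^+ r.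
have a_le i : 0 <= a i <= Q^-1.
  rewrite /a divr_ge0 ?exprn_ge0 //= ler_pdivrMr ?exprn_gt0 //.
  by rewrite mulrC ler_pdivlMr // -exprSr ler_eXn2l.
have a_le1 i : 0 <= a i <= 1.
  by have /andP[-> /le_trans->] := a_le i; rewrite // invf_le1 // ltW.
have sum_a : \sum_i a i <= r%:R / Q.
  rewrite -[r in r%:R]card_ord mulr_natl -sumr_const.
  by apply: ler_sum => i _; have /andP[] := a_le i.
have card_singular : #|[set Z : 'M[F]_r | \det Z == 0]|%:R
                     = Q ^+ (r * r) * (1 - \prod_i (1 - a i)).
  have -> : #|[set Z : 'M[F]_r | \det Z == 0]| = (q ^ (r * r) - nframes q r r)%N.
    rewrite -card_unitmx -card_mx -(cardsC [set Z : 'M[F]_r | Z \in unitmx]) addKn.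
    by apply: eq_card => Z; rewrite !inE unitmxE unitfE negbK.
  rewrite natrB -?card_unitmx -?card_mx ?max_card // card_mx card_unitmx natrX -/Q.
  rewrite mulrBr mulr1; congr (_ - _).
  have -> : Q ^+ (r * r) = \prod_(i < r) Q ^+ r by rewrite prodr_const card_ord exprM.
  rewrite -big_split /nframes natr_prod; apply: eq_bigr => i _ /=.
  rewrite natrB ?leq_pexp2l ?(ltnW q_gt1) 1?ltnW // !natrX.
  by rewrite /a mulrBr mulr1 mulrCA divff ?mulr1 // expf_neq0 // gt_eqF.
rewrite card_singular natrX -/Q.
rewrite [X in _ <= X](_ : _ = Q ^+ (r * r) * (r%:R / Q)); last by ring.
rewrite ler_wpM2l ?exprn_ge0 // lerBlDr -lerBlDl.
by apply: le_trans _ (one_sub_sum_le_prod a_le1); rewrite lerD2l lerN2.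
Qed.

Lemma card_det_row_mx_eq0 s r (A : 'M[F]_(s + r, s)) : \rank A = s ->
  #|[set Z : 'M[F]_(s + r, r) | \det (row_mx A Z) == 0]|
  = (q ^ (s * r) * #|[set W : 'M[F]_r | \det W == 0%R]|)%N.
Proof.
move=> rankA; set L := col_ebase A; set U := row_ebase A.
have unitL : L \in unitmx := col_ebase_unit A.
have unitU : U \in unitmx := row_ebase_unit A.
have defA : A = L *m col_mx 1%:M 0 *m U.
  by have := mulmx_ebase A; rewrite rankA pid_mx_col => ->.
have detE (Z : 'M[F]_(s + r, r)) :
    \det (row_mx A Z) = \det L * \det (dsubmx (invmx L *m Z)) * \det U.
  have -> : row_mx A Z
      = L *m (row_mx (col_mx 1%:M 0) (invmx L *m Z) *m block_mx U 0 0 1%:M).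
    rewrite mul_row_block !mulmx0 mulmx1 addr0 add0r mul_mx_row.
    by rewrite mulKVmx // mulmxA -defA.
  rewrite !det_mulmx det_ublock det1 mulr1 -[invmx L *m Z]vsubmxK -block_mxEh.
  by rewrite det_ublock det1 mul1r col_mxKd mulrA.
rewrite -(card_dsubmx_pred s (fun W : 'M[F]_r => \det W == 0)).
rewrite -(card_set_comp_inj (fun W => \det (dsubmx W) == 0) (can_inj (mulKVmx unitL))).
apply: eq_card => Z; rewrite !inE detE !mulf_eq0 orbC.
by move: unitL unitU; rewrite !unitmxE !unitfE => /negPf-> /negPf->.
Qed.

(* A substitute for the Schwartz-Zippel bound on det [A | C + X D] as a
   polynomial of degree r in the entries of X. *)
Lemma card_det_row_mx_affine_le s r t (A : 'M[F]_(s + r, s)) (C : 'M[F]_(s + r, r))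
    (D : 'M[F]_(t, r)) : \rank A = s -> \rank D = r ->
  (#|[set X : 'M[F]_(s + r, t) | \det (row_mx A (C + X *m D)) == 0]|%:R : rat)
  <= r%:R * (q ^ ((s + r) * t))%:R / q%:R.
Proof.
move=> rankA rankD; set N := #|_|.
have [E DE] : exists E, D^T *m E = 1%:M by apply/row_freeP; rewrite /row_free mxrank_tr rankD.
have ED : E^T *m D = 1%:M by rewrite -[D]trmxK -trmx_mul DE trmx1.
have := card_mulmx_pred (fun Y => \det (row_mx A (C + Y)) == 0) ED.
rewrite -/N (card_set_comp_inj (fun Z => \det (row_mx A Z) == 0) (addrI C)).
rewrite card_det_row_mx_eq0 // => /(congr1 (fun n => n%:R : rat)).
rewrite !natrM !natrX; set Q : rat := q%:R => card_eq.
have Q_gt0 : 0 < Q by rewrite ltr0n (ltnW (finNzRing_gt1 F)).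
have Q_ge0 : 0 <= Q := ltW Q_gt0.
rewrite -(ler_pM2r (exprn_gt0 ((s + r) * r) Q_gt0)) card_eq.
have -> : Q ^+ ((s + r) * r) = Q ^+ (s * r) * Q ^+ (r * r) by rewrite -exprD mulnDl.
rewrite [X in _ <= X](_ : _ = Q ^+ (s * r) * (r%:R * Q ^+ (r * r) / Q) * Q ^+ ((s + r) * t));
  last by ring.
apply: ler_wpM2r; first exact: exprn_ge0.
apply: ler_wpM2l; first exact: exprn_ge0.
by have := card_singular_le r; rewrite natrX.
Qed.

Lemma rank_row_mx_le m n1 n2 (P : 'M[F]_(m, n1)) (Q : 'M[F]_(m, n2)) :
  (\rank (row_mx P Q) <= \rank P + \rank Q)%N.
Proof.
rewrite -mxrank_tr tr_row_mx -addsmxE -(mxrank_tr P) -(mxrank_tr Q).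
exact: mxrank_adds_leqif.
Qed.

(** * Lower block forms *)

Lemma exists_unit_usubmx_eq0 s r t (M : 'M[F]_(s + r, t)) : (\rank M <= r)%N ->
  exists2 g : 'M[F]_(s + r), g \in unitmx & usubmx (g *m M) = 0.
Proof.
move=> rankM; pose rev := perm (@rev_ord_inj (s + r)).
(* invmx (col_ebase M) gathers the nonzero rows of M on top; reversing the
   rows moves them to the bottom. *)
exists (perm_mx rev *m invmx (col_ebase M)).
  by rewrite unitmx_mul unitmx_perm unitmx_inv col_ebase_unit.
rewrite -{2}(mulmx_ebase M) !mulmxA mulmxKV ?col_ebase_unit // -row_permE.
apply/matrixP => i j; rewrite !mxE big1 // => l _; rewrite !mxE permE /=.
suff /negPf-> : ~~ (s + r - i.+1 < \rank M)%N by rewrite andbF mul0r.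
by rewrite -leqNgt (leq_trans rankM) //; have := ltn_ord i; lia.
Qed.

Definition lower_block_form s r n t (B : 'M[F]_(s + r, n + t)) : bool :=
  [&& row_free (ulsubmx B), ursubmx B == 0 & row_free (drsubmx B)].

Definition lower_block_unit s r (g : 'M[F]_(s + r)) : bool :=
  [&& ulsubmx g \in unitmx, ursubmx g == 0 & drsubmx g \in unitmx].

Lemma exists_lower_block_form s r n t (B : 'M[F]_(s + r, n + t)) :
  row_free B -> \rank (rsubmx B) = r ->
  exists2 g : 'M[F]_(s + r), g \in unitmx & lower_block_form (g *m B).
Proof.
move=> freeB rankB2; have [g unit_g usub0] := exists_unit_usubmx_eq0 (eq_leq rankB2).
exists g => //; set B1 := g *m B.
have rsubB1 : rsubmx B1 = g *m rsubmx B by rewrite /B1 -[B]hsubmxK mul_mx_row !row_mxKr.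
have ur0 : ursubmx B1 = 0 by rewrite ursubmx_rsub rsubB1.
have rank_dr : \rank (drsubmx B1) = r.
  rewrite -(rank_col_0mx s) -ur0 ursubmx_rsub drsubmx_rsub vsubmxK rsubB1.
  by rewrite eqmxMfull ?row_full_unit.
have freeB1 : row_free B1 by rewrite /row_free eqmxMfull ?row_full_unit.
rewrite /lower_block_form ur0 /row_free rank_dr !eqxx andbT eqn_leq rank_leq_row /=.
have : (s + r <= \rank (row_mx (ulsubmx B1) (0 : 'M_(s, t)))
                + \rank (row_mx (dlsubmx B1) (drsubmx B1)))%N.
  by rewrite -(eqP freeB1) -{1}[B1]submxK ur0 block_mxEv -addsmxE mxrank_adds_leqif.
rewrite rank_row_mx0 => /leq_trans/(_ (leq_add (leqnn _) (rank_leq_row _))).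
by rewrite leq_add2r andbT.
Qed.

Lemma lower_block_unit_unitmx s r (g : 'M[F]_(s + r)) :
  lower_block_unit g -> g \in unitmx.
Proof.
case/and3P => ul_unit /eqP ur0 dr_unit.
by rewrite -[g]submxK ur0 unitmxE det_lblock unitrM -!unitmxE ul_unit dr_unit.
Qed.

Lemma lower_block_form_mull s r n t (g : 'M[F]_(s + r)) (B : 'M[F]_(s + r, n + t)) :
  lower_block_unit g -> lower_block_form B -> lower_block_form (g *m B).
Proof.
case/and3P => ul_unit /eqP gur0 dr_unit /and3P[freeA /eqP Bur0 freeD].
rewrite -[g]submxK -[B]submxK gur0 Bur0 mulmx_block !mulmx0 !mul0mx !addr0 add0r.
rewrite /lower_block_form block_mxKul block_mxKur block_mxKdr eqxx /row_free.
by rewrite !eqmxMfull ?row_full_unit // (eqP freeA) (eqP freeD) !eqxx.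
Qed.

Lemma lower_block_form_row_free s r n t (B : 'M[F]_(s + r, n + t)) :
  lower_block_form B -> row_free B.
Proof.
case/and3P => /row_freeP[A' AA'] /eqP ur0 /row_freeP[D' DD'].
apply/row_freeP; exists (block_mx A' 0 (- (D' *m dlsubmx B *m A')) D').
rewrite -[B]submxK ur0 mulmx_block !mulmx0 !mul0mx !addr0 mulmxN !mulmxA DD' mul1mx AA'.
by rewrite block_mxKdl subrr add0r -scalar_mx_block.
Qed.

Lemma card_lower_block_ratio s r t :
  (#|[set B : 'M[F]_(s + r, (s + r) + t) | lower_block_form B]|%:R
   / #|[set g : 'M[F]_(s + r) | lower_block_unit g]|%:R : rat)
  = gauss_binom q (s + r) s * gauss_binom q t r * (q ^ (r * r))%:R.
Proof.
have q_gt1 : (1 < q)%N := finNzRing_gt1 F.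
have nframes_neq0 b : (nframes q b b)%:R != 0 :> rat.
  by rewrite gt_eqF // ltr0n; apply/prodn_gt0 => i; rewrite subn_gt0 ltn_exp2l.
have pow_neq0 b : (q ^ b)%:R != 0 :> rat by rewrite gt_eqF // ltr0n expn_gt0 ltnW.
rewrite !card_lower_block !card_row_free !card_unitmx !gauss_binom_nframes //.
by rewrite mulnDr expnD !natrM; field; rewrite !nframes_neq0 pow_neq0.
Qed.

End FiniteFieldMatrices.

(** * Rank-metric codes *)

Section RankMetricCodes.
Variables (F : finFieldType) (L : fieldExtType F).
Local Notation K := (finvect_type L).
Local Notation liftK := (map_mx (in_alg K)).

Lemma rank_mx_of_mulmx N p (w : 'rV[K]_N) (P : 'M[F]_(N, p)) :
  rank_mx_of (w *m liftK P) = rank_mx_of w *m P.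
Proof.
apply/matrixP => a l; rewrite !mxE linear_sum; apply: eq_bigr => j _ /=.
by rewrite !mxE mulr_algr linearZ /= mulrC.
Qed.

Lemma rank_mx_of_eq0 N (w : 'rV[K]_N) : rank_mx_of w = 0 -> w = 0.
Proof.
move=> /matrixP w0; apply/rowP => j; rewrite mxE (coord_vbasis (memvf (w 0 j))).
by apply: big1 => a _; have := w0 a j; rewrite !mxE => ->; rewrite scale0r.
Qed.

Lemma rank_mx_of_row_mx n1 n2 (a : 'rV[K]_n1) (b : 'rV[K]_n2) :
  rank_mx_of (row_mx a b) = row_mx (rank_mx_of a) (rank_mx_of b).
Proof.
apply/matrixP => i j; rewrite -(splitK j); case: (split j) => j' /=.
  by rewrite mxE row_mxEl row_mxEl mxE.
by rewrite mxE row_mxEr row_mxEr mxE.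
Qed.

Lemma rk_mulmx_le N p (w : 'rV[K]_N) (P : 'M[F]_(N, p)) :
  (rk (w *m liftK P) <= \rank P)%N.
Proof. by rewrite /rk rank_mx_of_mulmx mxrankM_maxr. Qed.

Lemma rk_delta_mx_le k (i : 'I_k) : (rk (delta_mx 0%R i : 'rV[K]_k) <= 1)%N.
Proof.
rewrite -(map_delta_mx (in_alg K)) -[X in rk X]mul1mx.
exact: leq_trans (rk_mulmx_le _ _) (rank_leq_row _).
Qed.

Lemma exists_annihilating_frame N k (w : 'rV[K]_N) : (rk w + k <= N)%N ->
  exists2 B : 'M[F]_(k, N), row_free B & w *m (liftK B)^T = 0.
Proof.
move=> rk_le; set M := rank_mx_of w; set Ker := kermx M^T.
have k_le : (k <= \rank Ker)%N.
  by rewrite mxrank_ker mxrank_tr leq_subRL ?rank_leq_col // addnC.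
exists ((pid_mx k : 'M_(k, \rank Ker)) *m row_base Ker).
  by rewrite /row_free mxrankMfree ?row_base_free // rank_pid_mx.
have BM : (pid_mx k : 'M_(k, \rank Ker)) *m row_base Ker *m M^T = 0.
  by apply/sub_kermxP; rewrite (submx_trans (submxMl _ _)) // eq_row_base.
apply: rank_mx_of_eq0.
by rewrite map_trmx rank_mx_of_mulmx -/M -[M]trmxK -trmx_mul BM trmx0.
Qed.

Definition singular_frame k t (X : 'M[K]_(k, t)) (B : 'M[F]_(k, k + t)) : bool :=
  \det (row_mx 1%:M X *m (liftK B)^T) == 0.

Lemma rk_codeword_gt k t (X : 'M[K]_(k, t)) (w : 'rV[K]_(k + t)) :
  (forall B, row_free B -> ~~ singular_frame X B) ->
  (w <= row_mx 1%:M X)%MS -> w != 0 -> (t < rk w)%N.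
Proof.
move=> nonsing /submxP[x ->] xG_neq0; rewrite ltnNge; apply/negP => rk_le.
have [B freeB] : exists2 B : 'M[F]_(k, k + t),
    row_free B & x *m row_mx 1%:M X *m (liftK B)^T = 0.
  by apply: exists_annihilating_frame; rewrite addnC leq_add2l.
have unitGB : row_mx 1%:M X *m (liftK B)^T \in unitmx by rewrite unitmxE unitfE nonsing.
rewrite -mulmxA => /(congr1 (mulmx^~ (invmx (row_mx 1%:M X *m (liftK B)^T)))).
by rewrite mulmxK // mul0mx => x0; rewrite x0 mul0mx eqxx in xG_neq0.
Qed.

Lemma MRD_of_nonsingular k t (X : 'M[K]_(k, t)) : (0 < k)%N ->
  (forall B, row_free B -> ~~ singular_frame X B) -> is_MRD (row_mx 1%:M X).
Proof.
move=> k_gt0 nonsing; set G := row_mx 1%:M X.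
have rankG : \rank G = k.
  apply/eqP/row_freeP; exists (col_mx 1%:M 0).
  by rewrite mul_row_col mulmx1 mulmx0 addr0.
rewrite /is_MRD rankG addKn addn1; apply/andP; split.
  pose i0 : 'I_k := Ordinal k_gt0.
  have rowG_neq0 : row i0 G != 0.
    apply: contraNneq (oner_neq0 K) => /rowP/(_ (lshift t i0)).
    by rewrite mxE row_mxEl !mxE eqxx => <-.
  apply/existsP; exists (row i0 G); apply/existsP; exists 0.
  rewrite row_sub sub0mx rowG_neq0 /rank_dist subr0 eqn_leq.
  rewrite (rk_codeword_gt nonsing) ?row_sub // andbT.
  rewrite /rk row_row_mx rank_mx_of_row_mx (leq_trans (rank_row_mx_le _ _)) //.
  by rewrite -add1n leq_add ?rank_leq_col // row1; apply: rk_delta_mx_le.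
apply/forallP => u; apply/forallP => v; apply/implyP => /and3P[uG vG u_neq_v].
by rewrite /rank_dist (rk_codeword_gt nonsing) ?subr_eq0 // addmx_sub // eqmx_opp.
Qed.

Lemma singular_frame_mull k t (X : 'M[K]_(k, t)) (g : 'M[F]_k) (B : 'M[F]_(k, k + t)) :
  g \in unitmx -> singular_frame X (g *m B) = singular_frame X B.
Proof.
rewrite unitmxE unitfE => /negPf det_g_neq0.
rewrite /singular_frame map_mxM trmx_mul mulmxA det_mulmx det_tr det_map_mx.
by rewrite mulf_eq0 fmorph_eq0 det_g_neq0 orbF.
Qed.

Lemma singular_frame_block s r t (X : 'M[K]_(s + r, t)) (B : 'M[F]_(s + r, (s + r) + t)) :
  ursubmx B = 0 -> singular_frame X B = (\det (row_mx (liftK (ulsubmx B))^T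
     ((liftK (dlsubmx B))^T + X *m (liftK (drsubmx B))^T)) == 0).
Proof.
move=> ur0; rewrite /singular_frame -{1}[B]submxK ur0 map_block_mx map_mx0 tr_block_mx trmx0.
by rewrite mul_row_block !mul1mx mulmx0 addr0.
Qed.

Lemma card_singular_frame_le s r t (B : 'M[F]_(s + r, (s + r) + t)) : lower_block_form B ->
  (#|[set X : 'M[K]_(s + r, t) | singular_frame X B]|%:R : rat)
  <= r%:R * (#|K| ^ ((s + r) * t))%:R / #|K|%:R.
Proof.
case/and3P => freeA /eqP ur0 freeD.
have rankA : \rank (liftK (ulsubmx B))^T = s by rewrite mxrank_tr mxrank_map; apply/eqP.
have rankD : \rank (liftK (drsubmx B))^T = r by rewrite mxrank_tr mxrank_map; apply/eqP.
apply: le_trans (card_det_row_mx_affine_le (liftK (dlsubmx B))^T rankA rankD).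
by rewrite ler_nat eq_leq //; apply: eq_card => X; rewrite !inE singular_frame_block.
Qed.

Definition singular_set k t :=
  [set X : 'M[K]_(k, t) | [exists B, row_free B && singular_frame X B]].

Definition singular_set_rank k t r := [set X : 'M[K]_(k, t) |
  [exists B : 'M[F]_(k, k + t), [&& row_free B, \rank (rsubmx B) == r & singular_frame X B]]].

Lemma card_singular_set_rank_le k t r : (r <= k)%N ->
  (#|singular_set_rank k t r|%:R : rat)
  <= gauss_binom #|F| k (k - r) * gauss_binom #|F| t r * (#|F| ^ (r * r))%:R
     * (r%:R * (#|K| ^ (k * t))%:R / #|K|%:R).
Proof.
move=> le_rk; have [s ->] : exists s, k = (s + r)%N by exists (k - r)%N; rewrite subnK.
rewrite addnK -card_lower_block_ratio.
set NF := [set B : 'M[F]_(s + r, (s + r) + t) | lower_block_form B].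
set LT := [set g : 'M[F]_(s + r) | lower_block_unit g].
set bound := r%:R * _ / _.
have LT_gt0 : (0 < #|LT|)%N.
  apply/card_gt0P; exists 1%:M; rewrite inE /lower_block_unit (scalar_mx_block s r 1).
  by rewrite block_mxKul block_mxKur block_mxKdr !unitmx1 eqxx.
have orbit_le (X : 'M[K]_(s + r, t)) B : B \in NF -> singular_frame X B ->
    (#|LT| <= #|[set B' in NF | singular_frame X B']|)%N.
  rewrite inE => NF_B singB.
  have inj : {in LT &, injective (mulmx^~ B)}.
    exact: in2W (row_free_inj (lower_block_form_row_free NF_B)).
  rewrite -(card_in_imset inj); apply/subset_leq_card/subsetP => _ /imsetP[g + ->].
  rewrite !inE => LTg.
  by rewrite lower_block_form_mull // singular_frame_mull // lower_block_unit_unitmx.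
have to_NF : singular_set_rank (s + r) t r
             \subset [set X | [exists B in NF, singular_frame X B]].
  apply/subsetP => X; rewrite !inE => /existsP[B0 /and3P[freeB0 /eqP rankB0 singB0]].
  have [g unit_g NF_gB0] := exists_lower_block_form freeB0 rankB0.
  by apply/exists_inP; exists (g *m B0); rewrite ?inE // singular_frame_mull.
have := leq_trans (leq_mul (subset_leq_card to_NF) (leqnn _)) (card_double_count orbit_le).
rewrite -(ler_nat rat) natrM natr_sum => double_count.
rewrite mulrAC ler_pdivlMr ?ltr0n //; apply: le_trans double_count _.
rewrite mulr_natl -sumr_const; apply: ler_sum => B NF_B.
by apply: card_singular_frame_le; rewrite inE in NF_B.
Qed.

Lemma card_singular_set_ratio_le k t :
  (#|singular_set k t|%:R / #|{: 'M[K]_(k, t)}|%:R : rat)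
  <= \sum_(r < k.+1) r%:R * gauss_binom #|F| k (k - r) * gauss_binom #|F| t r
                     * (#|F| ^ (r ^ 2))%:R / #|K|%:R.
Proof.
pose S (r : 'I_k.+1) := singular_set_rank k t r.
have cover : (#|singular_set k t| <= \sum_(r < k.+1) #|S r|)%N.
  have one_rank X r : r \in [set: 'I_k.+1] -> X \in S r ->
      (1 <= #|[set r' in [set: 'I_k.+1] | X \in S r']|)%N.
    by move=> _ XSr; apply/card_gt0P; exists r; rewrite inE in_setT.
  apply: leq_trans (leq_trans _ (card_double_count one_rank)) _.
    rewrite muln1; apply/subset_leq_card/subsetP => X.
    rewrite !inE => /existsP[B /andP[freeB singB]].
    have rk_lt : (\rank (rsubmx B) < k.+1)%N by rewrite ltnS rank_leq_row.
    apply/exists_inP; exists (Ordinal rk_lt); rewrite // !inE.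
    by apply/existsP; exists B; rewrite freeB eqxx.
  rewrite (eq_bigl xpredT) => [|r]; last exact: in_setT.
  by apply: leq_sum => r _; apply/subset_leq_card/subsetP => X; rewrite inE.
have K_gt0 : (0 < #|K|)%N := ltnW (finNzRing_gt1 K).
rewrite ler_pdivrMr ?ltr0n ?card_mx ?expn_gt0 ?K_gt0 // mulr_suml.
apply: le_trans (_ : (\sum_r #|S r|)%:R <= _); first by rewrite ler_nat.
rewrite natr_sum; apply: ler_sum => r _.
apply: le_trans (card_singular_set_rank_le t (_ : r <= k)%N) _; first by rewrite -ltnS.
by rewrite natrX le_eqVlt; apply/predU1l; ring.
Qed.

End RankMetricCodes.

Lemma card_finvect_type (F : finFieldType) (L : fieldExtType F) :
  #|finvect_type L| = (#|F| ^ \dim {:finvect_type L})%N.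
Proof. by rewrite -card_vspace card_vspacef. Qed.

Theorem theorem4p6 (q m k n : nat) (F : finFieldType) (L : fieldExtType F)
  (hq : #|F| = q) (hm : \dim {:finvect_type L} = m) (hm1 : (1 <= m)%N)
  (hk1 : (1 <= k)%N) (hkn : (k < n)%N) :
  1 - \sum_(r < k.+1)
        (r%:R * gauss_binom q k (k - r) * gauss_binom q (n - k) r
         * (q ^ (r ^ 2))%N%:R / (q ^ m)%N%:R)
  <= (#|[set X : 'M[finvect_type L]_(k, n - k)
          | is_MRD (row_mx (1%:M : 'M[finvect_type L]_k) X)]|%:R
      / #|{: 'M[finvect_type L]_(k, n - k)}|%:R : rat).
Proof.
set t := (n - k)%N; set T := #|{: 'M[finvect_type L]_(k, t)}|.
have cardK : #|finvect_type L| = (q ^ m)%N by rewrite card_finvect_type hq hm.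
have T_neq0 : T%:R != 0 :> rat.
  by rewrite gt_eqF // ltr0n /T card_mx expn_gt0 cardK expn_gt0 -hq (ltnW (finNzRing_gt1 F)).
have good_ge : (T - #|singular_set L k t|
                <= #|[set X : 'M[finvect_type L]_(k, t) | is_MRD (row_mx 1%:M X)]|)%N.
  rewrite /T -(cardsC (singular_set L k t)) addKn; apply/subset_leq_card/subsetP => X.
  rewrite !inE => nonsing; apply: MRD_of_nonsingular hk1 _ => B freeB.
  by apply: contra nonsing => singB; apply/existsP; exists B; rewrite freeB.
have := card_singular_set_ratio_le L k t; rewrite hq cardK => bad_le.
apply: le_trans (_ : 1 - #|singular_set L k t|%:R / T%:R <= _); first by rewrite lerD2l lerN2.
rewrite -{1}[1](divff T_neq0) -mulrBl -natrB ?max_card //.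
by rewrite ler_wpM2r ?invr_ge0 ?ler0n // ler_nat.
Qed.
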